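(* Let $n\ge 1$ and consider $n$ buckets, where bucket $i$ contains $x_i$ white balls and $y_i$ black balls ($x_i,y_i$ nonnegative integers). Let $A$ be the number of (unordered) pairs of balls lying in the same bucket and having different colors. Consider any procedure that repeatedly selects a bucket and removes from it one white and one black ball, until in every bucket either no balls remain or all remaining balls have the same color, and let $B$ be the number of steps performed. Then $A\ge B^2/n$. *)

From mathcomp Require Import all_boot all_order all_algebra.
Set Implicit Arguments. Unset Strict Implicit. Unset Printing Implicit Defensive.
Import Order.TTheory GRing.Theory Num.Theory.

(* A configuration of n buckets: x i white balls and y i black balls in bucket i. *)
Definition dec_at (n : nat) (c : 'I_n -> nat) (i : 'I_n) : 'I_n -> nat :=
  fun j => if j == i then (c j).-1 else c j.

(* Running a procedure: s is the sequence of buckets selected at each step. *)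
Fixpoint run (n : nat) (x y : 'I_n -> nat) (s : seq 'I_n)
  : option (('I_n -> nat) * ('I_n -> nat)) :=
  match s with
  | [::] => Some (x, y)
  | i :: s' => if (0 < x i) && (0 < y i)
               then run (dec_at x i) (dec_at y i) s'
               else None
  end.

Definition terminal (n : nat) (x y : 'I_n -> nat) : Prop :=
  forall i : 'I_n, x i = 0%N \/ y i = 0%N.

Definition mixed_pairs (n : nat) (x y : 'I_n -> nat) : nat :=
  (\sum_(i < n) x i * y i)%N.

From mathcomp Require Import all_boot all_order all_algebra.
From mathcomp Require Import zify.
Import Order.TTheory GRing.Theory Num.Theory.
Local Open Scope ring_scope.

(* A legal procedure can select bucket i at most min(x i, y i) times, so with
   b i the number of selections of bucket i we get b i ^ 2 <= x i * y i.  The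
   number of steps is B = \sum_i b i, and Cauchy-Schwarz gives
   B ^ 2 <= n * \sum_i b i ^ 2 <= n * A. *)

Lemma count_mem_run_le {n : nat} {s : seq 'I_n} {x y xf yf : 'I_n -> nat} :
  run x y s = Some (xf, yf) ->
  forall i, (count_mem i s <= x i)%N /\ (count_mem i s <= y i)%N.
Proof.
elim: s x y => [|a s IHs] x y //=.
case: ifP => // /andP[xa_gt0 ya_gt0] /IHs count_le i.
have [le_x le_y] := count_le i; move: le_x le_y; rewrite /dec_at.
by case: (eqVneq i a) => [->|_] /=; lia.
Qed.

Lemma sum_count_mem (T : finType) (s : seq T) :
  (\sum_(i : T) count_mem i s)%N = size s.
Proof.
elim: s => [|a s IHs] /=; first by rewrite big1.
rewrite big_split /= IHs (bigD1 a) //= eqxx big1 // => i /negbTE.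
by rewrite eq_sym => ->.
Qed.

Lemma sqr_sum_le_card_mul_sum_sqr (I : finType) (c : I -> nat) :
  ((\sum_i c i) ^ 2 <= #|I| * \sum_i c i ^ 2)%N.
Proof.
rewrite -(leq_pmul2l (isT : 0 < 2)%N).
have -> : ((\sum_i c i) ^ 2 = \sum_i \sum_j c i * c j)%N.
  by rewrite expnS expn1 big_distrl; apply: eq_bigr => i _; rewrite big_distrr.
have -> : (2 * (#|I| * \sum_i c i ^ 2) = \sum_i \sum_j (c i ^ 2 + c j ^ 2))%N.
  under [RHS]eq_bigr => i _ do rewrite big_split /= sum_nat_const.
  by rewrite big_split /= sum_nat_const -big_distrr mul2n addnn.
rewrite big_distrr leq_sum // => i _.
rewrite big_distrr leq_sum // => j _.
exact: (nat_Cauchy _ _).1.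
Qed.

Theorem lemma2 (n : nat) (hn : (1 <= n)%N) (x y : 'I_n -> nat)
  (s : seq 'I_n) (xf yf : 'I_n -> nat)
  (hrun : run x y s = Some (xf, yf)) (hterm : terminal xf yf) :
  ((size s ^ 2)%N%:R / n%:R : rat) <= (mixed_pairs x y)%:R.
Proof.
have sqr_count_le i : (count_mem i s ^ 2 <= x i * y i)%N.
  have [le_x le_y] := count_mem_run_le hrun i.
  by rewrite expnS expn1 leq_mul.
have size_sqr_le : (size s ^ 2 <= n * mixed_pairs x y)%N.
  rewrite -sum_count_mem.
  apply: leq_trans (sqr_sum_le_card_mul_sum_sqr _ (fun i => count_mem i s)) _.
  by rewrite card_ord leq_mul2l leq_sum ?orbT.
by rewrite ler_pdivrMr ?ltr0n // -natrM ler_nat mulnC.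
Qed.
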